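(* Let $Y=(Y_{ij})$ be a $3\times 3$ real symmetric positive definite matrix which is Minkowski-reduced. Then for all $n\in\mathbb{R}^3$ we have ${}^t n\, Y\, n \ \ge\ \frac{1}{100}\,Y_{11}\,{}^t n\, n$.
   Context: A real symmetric positive definite $g\times g$ matrix $Y$ is Minkowski-reduced if (a) for all $j=1,\dots,g$ and all $v=(v_1,\dots,v_g)\in\mathbb{Z}^g$ with $\gcd(v_j,\dots,v_g)=1$ one has ${}^t v Y v\ge Y_{jj}$, and (b) for all $j=1,\dots,g-1$ one has $Y_{j,j+1}\ge 0$. *)

From Stdlib Require Import Reals ZArith List.
Open Scope R_scope.

(* A 3x3 real matrix is a function nat -> nat -> R; only indices 0,1,2 matter
   (0-indexed: paper's Y_{11} is Y 0 0). Vectors of R^3 are nat -> R. *)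

Definition qform3 (Y : nat -> nat -> R) (x : nat -> R) : R :=
  sum_f_R0 (fun i => sum_f_R0 (fun j => x i * Y i j * x j) 2) 2.

Definition sqnorm3 (x : nat -> R) : R := sum_f_R0 (fun i => x i * x i) 2.

Definition symmetric3 (Y : nat -> nat -> R) : Prop :=
  forall i j : nat, (i < 3)%nat -> (j < 3)%nat -> Y i j = Y j i.

Definition posdef3 (Y : nat -> nat -> R) : Prop :=
  forall x : nat -> R, (exists i, (i < 3)%nat /\ x i <> 0) -> qform3 Y x > 0.

Definition gcd_from (g : nat) (v : nat -> Z) (j : nat) : Z :=
  fold_right Z.gcd 0%Z (map v (seq j (g - j))).

Definition minkowski_reduced3 (Y : nat -> nat -> R) : Prop :=
  (forall (j : nat) (v : nat -> Z), (j < 3)%nat -> gcd_from 3 v j = 1%Z ->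
       qform3 Y (fun i => IZR (v i)) >= Y j j)
  /\ (forall j : nat, (j < 2)%nat -> Y j (S j) >= 0).

From Stdlib Require Import Reals ZArith List Lra Lia Psatz.
Open Scope R_scope.

(* Write the form as a x^2 + b y^2 + c z^2 + 2d xy + 2e xz + 2f yz.  Minkowski
   reduction gives a <= b <= c, 0 <= 2d <= a, 2|e| <= a, 0 <= 2f <= b and
   (from the vector (1,-1,1)) 2(d - e + f) <= a + b.  Bounding each cross term
   below by minus its absolute value when it is negative, and by 0 otherwise,
   leaves a form in |x|, |y|, |z| with nonpositive cross coefficients -2D, -2E,
   -2F; since the three cross terms multiply to d e f (xyz)^2, they can all be
   negative only when e < 0, so 2(D + E + F) <= a + b in every case.  For
   such a form, splitting off the minimum m of X = |x|, Y = |y|, Z = |z|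
   reduces the claim to the coercivity of
   ((X-Y)^2 + (Y-Z)^2 + (Z-X)^2)/2 + m^2. *)

Lemma spread_add_sq_ge (X Y Z : R) :
  X*X + Y*Y + 2*(Z*Z) - X*Y - X*Z - Y*Z >= (X*X + Y*Y + Z*Z) / 100.
Proof.
  pose proof (Rle_0_sqr (X - 50/99*Y - 50/99*Z)).
  pose proof (Rle_0_sqr (Y - 50/49*Z)).
  pose proof (Rle_0_sqr Z).
  unfold Rsqr in *; lra.
Qed.

Lemma spread_add_min_sq_ge (X Y Z : R) :
  X*X + Y*Y + Z*Z - X*Y - X*Z - Y*Z + Rmin X (Rmin Y Z) * Rmin X (Rmin Y Z)
    >= (X*X + Y*Y + Z*Z) / 100.
Proof.
  destruct (Rle_or_lt Y Z);
    [rewrite (Rmin_left Y Z) by lra | rewrite (Rmin_right Y Z) by lra];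
  match goal with |- context [Rmin X ?W] =>
    destruct (Rle_or_lt X W);
    [rewrite (Rmin_left X W) by lra | rewrite (Rmin_right X W) by lra] end.
  all: first [ pose proof (spread_add_sq_ge Y Z X); lra
             | pose proof (spread_add_sq_ge X Z Y); lra
             | pose proof (spread_add_sq_ge X Y Z); lra ].
Qed.

Lemma reduced_abs_form_ge a b c D E F X Y Z :
  0 <= a -> a <= b -> b <= c -> 2*D <= a -> 2*E <= a -> 2*F <= b ->
  2*(D + E + F) <= a + b -> 0 <= X -> 0 <= Y -> 0 <= Z ->
  a*(X*X) + b*(Y*Y) + c*(Z*Z) - 2*D*(X*Y) - 2*E*(X*Z) - 2*F*(Y*Z)
    >= / 100 * a * (X*X + Y*Y + Z*Z).
Proof.
  intros Ha Hab Hbc HD HE HF HDEF HX HY HZ.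
  (* D XY + E XZ + F YZ = D (XY - m^2) + E (XZ - m^2) + F (YZ - m^2) + (D+E+F) m^2 *)
  pose proof (spread_add_min_sq_ge X Y Z) as Hspread; set (m := Rmin X (Rmin Y Z)) in Hspread.
  assert (HmX : m <= X) by (apply Rmin_l).
  assert (HmY : m <= Y) by (eapply Rle_trans; [apply Rmin_r | apply Rmin_l]).
  assert (HmZ : m <= Z) by (eapply Rle_trans; [apply Rmin_r | apply Rmin_r]).
  assert (Hm : 0 <= m) by (apply Rmin_glb; [| apply Rmin_glb]; assumption).
  assert (0 <= (a - 2*D) * (X*Y - m*m)) by (apply Rmult_le_pos; nra).
  assert (0 <= (a - 2*E) * (X*Z - m*m)) by (apply Rmult_le_pos; nra).
  assert (0 <= (b - 2*F) * (Y*Z - m*m)) by (apply Rmult_le_pos; nra).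
  assert (0 <= (a + b - 2*(D + E + F)) * (m*m)) by (apply Rmult_le_pos; nra).
  assert (0 <= (c - b) * (Z*Z)) by (apply Rmult_le_pos; nra).
  assert (0 <= (b - a) * (Y*Y - Y*Z + Z*Z)) by (apply Rmult_le_pos; nra).
  assert (a * ((X*X + Y*Y + Z*Z) / 100)
          <= a * (X*X + Y*Y + Z*Z - X*Y - X*Z - Y*Z + m*m))
    by (apply Rmult_le_compat_l; lra).
  lra.
Qed.

Lemma cross_terms_all_neg_sign d e f x y z :
  0 <= d -> 0 <= f -> d*(x*y) < 0 -> e*(x*z) < 0 -> f*(y*z) < 0 -> e < 0.
Proof.
  intros Hd Hf Hp Hq Hr.
  assert (Hxz : 0 < x*z).
  { assert (Hprod : 0 < (d*f*(y*y)) * (x*z)).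
    { replace ((d*f*(y*y))*(x*z)) with ((d*(x*y))*(f*(y*z))) by ring; nra. }
    destruct (Rlt_or_le 0 (x*z)) as [|Hneg]; [assumption|].
    assert (0 <= d*f*(y*y))
      by (apply Rmult_le_pos; [apply Rmult_le_pos | apply Rle_0_sqr]; assumption).
    nra. }
  nra.
Qed.

Definition neg_coef (d u : R) : R := if Rlt_dec (d*u) 0 then Rabs d else 0.

Lemma neg_coef_le_abs d u : neg_coef d u <= Rabs d.
Proof. unfold neg_coef; destruct (Rlt_dec (d*u) 0); [lra | apply Rabs_pos]. Qed.

Lemma mul_ge_neg_coef d u : d*u >= - (neg_coef d u * Rabs u).
Proof.
  unfold neg_coef; destruct (Rlt_dec (d*u) 0); [|lra].
  rewrite <- Rabs_mult, <- Rabs_Ropp.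
  pose proof (Rle_abs (- (d*u))); lra.
Qed.

Definition tern_form (a b c d e f x y z : R) : R :=
  a*(x*x) + b*(y*y) + c*(z*z) + 2*d*(x*y) + 2*e*(x*z) + 2*f*(y*z).

Record minkowski_coeffs (a b c d e f : R) : Prop := {
  mc_ab : a <= b;
  mc_bc : b <= c;
  mc_d_nonneg : 0 <= d;
  mc_d_le : 2*d <= a;
  mc_e_le : 2 * Rabs e <= a;
  mc_f_nonneg : 0 <= f;
  mc_f_le : 2*f <= b;
  mc_def_le : 2*(d - e + f) <= a + b }.

Lemma tern_form_ge a b c d e f x y z :
  minkowski_coeffs a b c d e f ->
  tern_form a b c d e f x y z >= / 100 * a * (x*x + y*y + z*z).
Proof.
  intros [Hab Hbc Hd Hd2 He2 Hf Hf2 Hdef].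
  assert (HDEF : 2*(neg_coef d (x*y) + neg_coef e (x*z) + neg_coef f (y*z)) <= a + b).
  { unfold neg_coef; rewrite (Rabs_pos_eq d Hd), (Rabs_pos_eq f Hf).
    destruct (Rlt_dec (d*(x*y)) 0) as [Hp|], (Rlt_dec (e*(x*z)) 0) as [Hq|],
      (Rlt_dec (f*(y*z)) 0) as [Hr|]; try lra.
    rewrite (Rabs_left e) by exact (cross_terms_all_neg_sign d e f x y z Hd Hf Hp Hq Hr).
    lra. }
  pose proof (neg_coef_le_abs d (x*y)) as HD; rewrite (Rabs_pos_eq d Hd) in HD.
  pose proof (neg_coef_le_abs e (x*z)) as HE.
  pose proof (neg_coef_le_abs f (y*z)) as HF; rewrite (Rabs_pos_eq f Hf) in HF.
  pose proof (mul_ge_neg_coef d (x*y)); pose proof (mul_ge_neg_coef e (x*z));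
  pose proof (mul_ge_neg_coef f (y*z)).
  pose proof (Rabs_pos e).
  pose proof (reduced_abs_form_ge a b c
    (neg_coef d (x*y)) (neg_coef e (x*z)) (neg_coef f (y*z)) (Rabs x) (Rabs y) (Rabs z)
    ltac:(lra) Hab Hbc ltac:(lra) ltac:(lra) ltac:(lra) HDEF
    (Rabs_pos x) (Rabs_pos y) (Rabs_pos z)) as Habs.
  assert (Habs_sq : forall t, Rabs t * Rabs t = t * t)
    by (intro t; rewrite <- Rabs_mult; apply Rabs_pos_eq, Rle_0_sqr).
  rewrite !Habs_sq, <- !Rabs_mult in Habs.
  unfold tern_form; lra.
Qed.

Lemma qform3_tern_form Y n : symmetric3 Y ->
  qform3 Y n = tern_form (Y 0%nat 0%nat) (Y 1%nat 1%nat) (Y 2%nat 2%nat)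
    (Y 0%nat 1%nat) (Y 0%nat 2%nat) (Y 1%nat 2%nat) (n 0%nat) (n 1%nat) (n 2%nat).
Proof.
  intros Hsym; unfold qform3, tern_form; cbn [sum_f_R0].
  rewrite (Hsym 1%nat 0%nat), (Hsym 2%nat 0%nat), (Hsym 2%nat 1%nat) by lia.
  ring.
Qed.

Definition zvec3 (p q r : Z) : nat -> Z :=
  fun i => match i with 0%nat => p | 1%nat => q | 2%nat => r | _ => 0%Z end.

Lemma minkowski_reduced3_coeffs Y : symmetric3 Y -> minkowski_reduced3 Y ->
  minkowski_coeffs (Y 0%nat 0%nat) (Y 1%nat 1%nat) (Y 2%nat 2%nat)
    (Y 0%nat 1%nat) (Y 0%nat 2%nat) (Y 1%nat 2%nat).
Proof.
  intros Hsym [Hmin Hsign].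
  assert (Hvec : forall j p q r, (j < 3)%nat -> gcd_from 3 (zvec3 p q r) j = 1%Z ->
    tern_form (Y 0%nat 0%nat) (Y 1%nat 1%nat) (Y 2%nat 2%nat) (Y 0%nat 1%nat)
      (Y 0%nat 2%nat) (Y 1%nat 2%nat) (IZR p) (IZR q) (IZR r) >= Y j j).
  { intros j p q r Hj Hgcd.
    pose proof (Hmin j _ Hj Hgcd) as Hq; rewrite qform3_tern_form in Hq by exact Hsym.
    exact Hq. }
  pose proof (Hvec 0%nat 0%Z 1%Z 0%Z ltac:(lia) eq_refl).
  pose proof (Hvec 1%nat 0%Z 0%Z 1%Z ltac:(lia) eq_refl).
  pose proof (Hvec 1%nat 1%Z (-1)%Z 0%Z ltac:(lia) eq_refl).
  pose proof (Hvec 2%nat 1%Z 0%Z 1%Z ltac:(lia) eq_refl).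
  pose proof (Hvec 2%nat 1%Z 0%Z (-1)%Z ltac:(lia) eq_refl).
  pose proof (Hvec 2%nat 0%Z (-1)%Z 1%Z ltac:(lia) eq_refl).
  pose proof (Hvec 2%nat 1%Z (-1)%Z 1%Z ltac:(lia) eq_refl).
  pose proof (Hsign 0%nat ltac:(lia)); pose proof (Hsign 1%nat ltac:(lia)).
  unfold tern_form in *.
  constructor; try lra.
  unfold Rabs; destruct (Rcase_abs (Y 0%nat 2%nat)); lra.
Qed.

Theorem lemma2p2 (Y : nat -> nat -> R) :
  symmetric3 Y -> posdef3 Y -> minkowski_reduced3 Y ->
  forall n : nat -> R, qform3 Y n >= / 100 * Y 0%nat 0%nat * sqnorm3 n.
Proof.
  intros Hsym _ Hred n.
  rewrite (qform3_tern_form Y n Hsym).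
  pose proof (tern_form_ge _ _ _ _ _ _ (n 0%nat) (n 1%nat) (n 2%nat)
    (minkowski_reduced3_coeffs Y Hsym Hred)).
  unfold sqnorm3; cbn [sum_f_R0]; lra.
Qed.
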